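(* Let $(T,X)$ be a flow ($T$ a Hausdorff topological group, $X$ a Hausdorff uniform space) and let $S$ be a thick normal subsemigroup of $T$. Let $x\in X$ be such that $\overline{S^{-1}x}$ is compact and the subflow $(T,Tx)$ is uniformly Lyapunov $S$-stable. Then $\overline{Tx}$ is compact, $(T,\overline{Tx})$ is minimal, and $(T,\overline{Tx})$ is an a.p. flow.
   Context: $\mathscr U_X$ is a compatible symmetric uniformity of $X$. $S\subseteq T$ is (right) thick if for every compact $K\subseteq T$ there is $t$ with $Kt\subseteq S$; normal means $St=tS$ for all $t\in T$; $S^{-1}=\{s^{-1}:s\in S\}$. $(T,Tx)$ is uniformly Lyapunov $S$-stable if for every $\varepsilon\in\mathscr U_X$ there is $\delta\in\mathscr U_X$ such that $(sy,sz)\in\varepsilon$ for all $s\in S$ and all $y,z\in Tx$ with $(y,z)\in\delta$. $A\subseteq T$ is syndetic if there is compact $K$ with $Kt\cap A\neq\emptyset$ for all $t$. A flow $(T,Z)$ is an a.p. flow if for every $\alpha$ in its uniformity there is a syndetic $A\subseteq T$ with $Az\subseteq\alpha[z]$ for all $z\in Z$. *)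

From HB Require Import structures.
From mathcomp Require Import all_boot all_order.
From mathcomp Require Import all_classical all_reals topology.
Set Implicit Arguments. Unset Strict Implicit. Unset Printing Implicit Defensive.
Local Open Scope classical_set_scope.

Record topGroup (T : topologicalType) := TopGroup {
  gmul : T -> T -> T;
  gone : T;
  ginv : T -> T;
  gmulA : forall a b c, gmul a (gmul b c) = gmul (gmul a b) c;
  gmul1l : forall a, gmul gone a = a;
  gmul1r : forall a, gmul a gone = a;
  gmulVl : forall a, gmul (ginv a) a = gone;
  gmulVr : forall a, gmul a (ginv a) = gone;
  gmul_cont : continuous (fun p : T * T => gmul p.1 p.2);
  ginv_cont : continuous ginv
}.

Definition is_flow (T : topologicalType) (G : topGroup T) (X : topologicalType)
  (act : T -> X -> X) : Prop :=
  [/\ forall x, act (gone G) x = x,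
      forall s t x, act (gmul G s t) x = act s (act t x)
    & continuous (fun p : T * X => act p.1 p.2)].

Section Defs.
Variables (T : topologicalType) (G : topGroup T).
Local Notation "a * b" := (gmul G a b).

Definition subsemigroup (S : set T) := forall a b, S a -> S b -> S (a * b).

Definition thick (S : set T) :=
  forall K : set T, compact K -> exists t, forall k, K k -> S (k * t).

Definition normal_sub (S : set T) :=
  forall t, [set s * t | s in S] = [set t * s | s in S].

Definition syndetic (A : set T) :=
  exists K : set T, compact K /\ forall t, exists2 k, K k & A (k * t).

Definition inv_set (S : set T) : set T := [set ginv G s | s in S].

Variables (X : uniformType) (act : T -> X -> X).

Definition torbit (x : X) : set X := [set act t x | t in [set: T]].

Definition invariant (Z : set X) := forall t z, Z z -> Z (act t z).

Definition unif_lyapunov_stable (S : set T) (x : X) :=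
  forall eps, entourage eps -> exists2 delta, entourage delta &
    forall s y z, S s -> torbit x y -> torbit x z -> delta (y, z) ->
      eps (act s y, act s z).

Definition minimal_flow (Z : set X) :=
  Z !=set0 /\
  forall A, A `<=` Z -> A !=set0 -> closed A -> invariant A -> A = Z.

(* (T, Z) is an a.p. flow; the uniformity of Z is the trace of that of X. *)
Definition ap_flow (Z : set X) :=
  forall alpha, entourage alpha -> exists2 A, syndetic A &
    forall a z, A a -> Z z -> alpha (z, act a z).

End Defs.

From Pilot Require Import Defs.
From HB Require Import structures.
From mathcomp Require Import all_boot all_order.
From mathcomp Require Import all_classical all_reals topology.
Local Open Scope classical_set_scope.

(* Let Y be the orbit closure of x, C the closure of S^-1 x.

   Proof outline.
   1. From thickness and normality of S we build, for each t, a sequence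
      c_n with c_n, c_n t and c_j c_i^-1 t^-1 (i < j) in S (thick_chain).
      The points c_n^-1 x lie in the compact set C, so two of them are close
      (close_pair).  Combined with Lyapunov stability this yields
      (a) Tx is contained in C, hence Y is compact (compactY), and
      (b) every point t x returns close to x under some s in S
          (orbit_recurrent).
   2. Stability passes to the closure Y (equicontY); with (b) this gives
      minimality of Y (minimalY).
   3. On the compact set Y, the equicontinuous family {act s | s in S} is
      uniformly approximated by finitely many of its members; by pigeonhole,
      g^-1 is then approximated by a power of g for g in S
      (inverse_power_approx).  Using thickness once more, every t admits a
      left translate k t, k in a fixed finite set, that moves Y little (apY). *)

Definition gpow {T : topologicalType} (G : topGroup T) (g : T) (n : nat) : T :=
  iter n (gmul G g) (gone G).

Section GroupAlgebra.
Context {T : topologicalType} {G : topGroup T}.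
Local Notation "a * b" := (gmul G a b).
Local Notation "a ^-1" := (ginv G a).
Local Notation e := (gone G).

Lemma mulKg a b : a^-1 * (a * b) = b.
Proof. by rewrite gmulA gmulVl gmul1l. Qed.

Lemma mulgK a b : (b * a) * a^-1 = b.
Proof. by rewrite -gmulA gmulVr gmul1r. Qed.

Lemma mulgKV a b : (b * a^-1) * a = b.
Proof. by rewrite -gmulA gmulVl gmul1r. Qed.

Lemma inv_uniq a b : a * b = e -> a^-1 = b.
Proof. by move=> abe; rewrite -[b](mulKg a) abe gmul1r. Qed.

Lemma ginvK a : (a^-1)^-1 = a.
Proof. by apply: inv_uniq; rewrite gmulVl. Qed.

Lemma ginvM a b : (a * b)^-1 = b^-1 * a^-1.
Proof. by apply: inv_uniq; rewrite gmulA mulgK gmulVr. Qed.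

Lemma gpowD g m n : gpow G g (m + n) = gpow G g m * gpow G g n.
Proof.
elim: m => [|m IHm]; first by rewrite add0n gmul1l.
by rewrite addSn /= IHm gmulA.
Qed.

Lemma gpowSr g n : gpow G g n.+1 = gpow G g n * g.
Proof. by rewrite -addn1 gpowD /= gmul1r. Qed.

Lemma gpow_subsemigroup {S : set T} {g} n :
  subsemigroup G S -> S g -> S (gpow G g n.+1).
Proof.
move=> semS Sg; elim: n => [|n IHn]; first by rewrite /gpow /= gmul1r.
exact: semS.
Qed.

End GroupAlgebra.

Lemma finite_repeat {J : finType} (c : nat -> J) :
  exists i j, (i < j)%N /\ c i = c j.
Proof.
apply: contrapT => norep.
have inj : injective (fun n : 'I_#|J|.+1 => c n).
  move=> a b cab; case: (ltngtP a b) => [ab|ba|ab]; last exact: val_inj.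
  - by exfalso; apply: norep; exists a, b.
  - by exfalso; apply: norep; exists b, a.
by have := leq_card _ inj; rewrite card_ord ltnn.
Qed.

Section UniformFacts.
Context {X : uniformType}.

Lemma closure_ent (A : set X) z :
  closure A z <-> forall E, entourage E -> exists w, A w /\ E (z, w).
Proof.
split=> [clAz E entE|closeA B /nbhsP [E entE EB]].
  have [w [Aw Ew]] := clAz _ (nbhs_entourage z entE).
  by exists w; split => //; move: Ew; rewrite /xsection /= inE.
have [w [Aw Ew]] := closeA E entE; exists w; split => //.
by apply: EB; rewrite /xsection /= inE.
Qed.

Lemma entourage_sym_split3 {eps : set (X * X)} : entourage eps ->
  exists2 E, entourage E & (forall a b, E (a, b) -> E (b, a)) /\
    forall a b c d, E (a, b) -> E (b, c) -> E (c, d) -> eps (a, d).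
Proof.
move=> entEps; set E1 := split_ent eps; set E2 := split_ent E1.
have entE1 : entourage E1 by exact: entourage_split_ent.
exists (E2 `&` E2^-1)%relation; first exact/entourage_invI/entourage_split_ent.
split=> [a b [? ?]|a b c d [ab _] [bc _] [cd _]]; first by split.
apply: (entourage_split c entEps); last exact: split_ent_subset.
exact: (entourage_split b entE1).
Qed.

Lemma entourage_sym_split {eps : set (X * X)} : entourage eps ->
  exists2 E, entourage E & (forall a b, E (a, b) -> E (b, a)) /\
    forall a b c, E (a, b) -> E (b, c) -> eps (a, c).
Proof.
move=> /entourage_sym_split3 [E entE [symE trE]]; exists E => //.
by split=> // a b c ab bc; apply: (trE a b c c) => //; exact: entourage_refl.
Qed.

Lemma compact_finite_net {A : set X} {E} : compact A -> entourage E ->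
  exists2 ds : seq X, (forall d, d \in ds -> A d) &
    forall z, A z -> exists2 d, d \in ds & E (d, z).
Proof.
move=> cA entE; apply: contrapT => nonet.
pose inA (ds : seq X) := forall d, d \in ds -> A d.
pose far (ds : seq X) := [set z | A z /\ forall d, d \in ds -> ~ E (d, z)].
have farF : ProperFilter (filter_from inA far).
  apply: filter_from_proper; last first.
    move=> ds inAds; apply: contrapT => farE; apply: nonet; exists ds => // z Az.
    apply: contrapT => nozd; apply: farE; exists z; split => // d dds Edz.
    by apply: nozd; exists d.
  apply: filter_from_filter; first by exists [::].
  move=> ds ds' inAds inAds'; exists (ds ++ ds').
    by move=> d; rewrite mem_cat => /orP [/inAds|/inAds'].
  by move=> z [Az nz]; split; split=> // d dds; apply: nz; rewrite mem_cat dds ?orbT.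
have farA : filter_from inA far A by exists [::] => // z [].
have [p [Ap clp]] := cA _ farF farA.
have inAp : inA [:: p] by move=> d; rewrite inE => /eqP ->.
have [w [[_ farw] Epw]] := clp _ _ (ex_intro2 _ _ [:: p] inAp (fun z zf => zf))
  (nbhs_entourage p entE).
by apply: (farw p); rewrite ?inE //; move: Epw; rewrite /xsection /= inE.
Qed.

Lemma compact_seq_close {A : set X} {u : nat -> X} {E} :
  compact A -> (forall n, A (u n)) -> entourage E ->
  exists i j, (i < j)%N /\ E (u i, u j).
Proof.
move=> cA Au entE; have [E' entE' [symE' trE']] := entourage_sym_split entE.
have uA : (u @ \oo) A by apply: filterS (nbhs_infty_ge 0) => n _; exact: Au.
have [p [_ clp]] := cA _ _ uA.
have tail N : (u @ \oo) (u @` [set n | (N <= n)%N]).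
  by apply: filterS (nbhs_infty_ge N) => n Nn; exists n.
have near N : exists2 n, (N <= n)%N & E' (p, u n).
  have [_ [[n Nn <-] pun]] := clp _ _ (tail N) (nbhs_entourage p entE').
  by exists n => //; move: pun; rewrite /xsection /= inE.
have [i _ pi] := near 0%N; have [j ij pj] := near i.+1.
by exists i, j; split => //; apply: (trE' _ p); [exact: symE'|].
Qed.

End UniformFacts.

Definition unif_equicont {X Z : uniformType} {I : Type} (P : set I)
    (f : I -> X -> Z) (A : set X) :=
  forall eps, entourage eps -> exists2 delta, entourage delta &
    forall i y z, P i -> A y -> A z -> delta (y, z) -> eps (f i y, f i z).

Section Equicontinuity.
Context {X Z : uniformType} {I : Type} {P : set I} {f : I -> X -> Z}.

Lemma unif_equicont_closure {A : set X} : (forall i, continuous (f i)) ->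
  unif_equicont P f A -> unif_equicont P f (closure A).
Proof.
move=> fcont equiA eps entEps.
have [E entE [symE trE]] := entourage_sym_split3 entEps.
have [d0 entd0 d0E] := equiA _ entE.
have [D entD [symD trD]] := entourage_sym_split3 entd0.
exists D => // i y z Pi Ay Az Dyz.
have approx w : closure A w -> exists w', [/\ A w', D (w, w') & E (f i w, f i w')].
  move=> Aw; have := Aw _ (filterI (nbhs_entourage w entD)
    (fcont i w _ (nbhs_entourage (f i w) entE))).
  by case=> w' [Aw' [Dww' Eww']]; exists w'; move: Dww' Eww'; rewrite /xsection/= !inE.
have [y' [Ay' Dyy' Eyy']] := approx y Ay.
have [z' [Az' Dzz' Ezz']] := approx z Az.
apply: (trE _ (f i y') (f i z')) => //; last exact: symE.
by apply: d0E => //; apply: (trD _ y z) => //; exact: symD.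
Qed.

End Equicontinuity.

(* On a compact set [A], a uniformly equicontinuous family of self-maps of
   [A] is totally bounded for uniform convergence on [A]: finitely many of
   its members approximate all of them ([i0] is a default index). *)
Lemma unif_equicont_finite_approx {X : uniformType} {I : Type} (i0 : I)
    {P : set I} {f : I -> X -> X} {A : set X} {eps} :
  compact A -> (forall i z, P i -> A z -> A (f i z)) ->
  unif_equicont P f A -> entourage eps ->
  exists (J : finType) (g : J -> I),
    forall i, P i -> exists j, forall z, A z -> eps (f i z, f (g j) z).
Proof.
move=> cA fA equiA entEps.
have [E1 entE1 [symE1 trE1]] := entourage_sym_split3 entEps.
have [d entd dE1] := equiA _ entE1.
have [ys Ays ysnet] := compact_finite_net cA entd.
have [E2 entE2 [symE2 trE2]] := entourage_sym_split entE1.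
have [ws _ wsnet] := compact_finite_net cA entE2.
pose ty := in_tuple ys; pose tw := in_tuple ws.
(* [pattern i c]: [c k] indexes a point of [ws] near the image of [ys_k]. *)
pose pattern i (c : {ffun 'I_(size ys) -> 'I_(size ws)}) :=
  forall k, E2 (tnth tw (c k), f i (tnth ty k)).
have pattern_ex i : P i -> exists c, pattern i c.
  move=> Pi; have near k : exists j, E2 (tnth tw j, f i (tnth ty k)).
    have [w /(tnthP tw) [j ->] Ew] := wsnet _ (fA _ _ Pi (Ays _ (mem_tnth k ty))).
    by exists j.
  exists [ffun k => projT1 (cid (near k))] => k; rewrite ffunE.
  exact: projT2 (cid (near k)).
pose rep c := if pselect (exists i, P i /\ pattern i c) is left h
  then projT1 (cid h) else i0.
exists {ffun 'I_(size ys) -> 'I_(size ws)}, rep => i Pi.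
have [c ic] := pattern_ex i Pi; exists c => z Az.
rewrite /rep; case: pselect => [h|]; last by case; exists i.
case: (projT2 (cid h)); set i' := projT1 (cid h) => Pi' i'c.
have [_ /(tnthP ty) [k ->] dyz] := ysnet _ Az.
have Ayk : A (tnth ty k) by apply: Ays; exact: mem_tnth.
apply: (trE1 _ (f i (tnth ty k)) (f i' (tnth ty k))).
- exact/symE1/dE1.
- exact: trE2 (symE2 _ _ (ic k)) (i'c k).
- exact: dE1.
Qed.

Section FlowFacts.
Context {T : topologicalType} {G : topGroup T} {X : uniformType}
  {act : T -> X -> X}.
Hypothesis flow : is_flow G act.

Lemma act1 z : act (gone G) z = z.
Proof. by case: flow. Qed.

Lemma actM s t z : act (gmul G s t) z = act s (act t z).
Proof. by case: flow. Qed.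

Lemma act_cont s : continuous (act s).
Proof.
move=> z; case: flow => _ _ act_jcont.
apply: (@continuous_comp _ _ _ (fun z : X => (s, z)) (fun p => act p.1 p.2));
  last exact: act_jcont.
by apply: cvg_pair; [exact: cvg_cst | exact: cvg_id].
Qed.

Lemma orbit_closure_orbit (x : X) t : closure (torbit act x) (act t x).
Proof. by apply: subset_closure; exists t. Qed.

Lemma orbit_closure_invariant (x : X) : Defs.invariant act (closure (torbit act x)).
Proof.
move=> t z clz B /(act_cont t) /clz [_ [[r _ <-] Btrx]].
by exists (act (gmul G t r) x); split; [exists (gmul G t r)|rewrite actM].
Qed.

End FlowFacts.

Section Thickness.
Context {T : topologicalType} {G : topGroup T} {S : set T}.
Hypotheses (thickS : thick G S) (normS : normal_sub G S).
Local Notation "a * b" := (gmul G a b).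
Local Notation "a ^-1" := (ginv G a).

Lemma normal_conj t {a} : S a -> S (t * a * t^-1).
Proof.
move=> Sa; have : [set s * t | s in S] (t * a) by rewrite normS; exists a.
by case=> s Ss <-; rewrite mulgK.
Qed.

Lemma thick_seq (ks : seq T) : exists u, forall k, k \in ks -> S (k * u).
Proof. exact: thickS (finite_compact (finite_seq ks)). Qed.

Lemma thick_seq_left (ks : seq T) : exists u, forall k, k \in ks -> S (u * k).
Proof.
have [u ksu] := thick_seq ks; exists u => k /ksu /(normal_conj k^-1).
by rewrite mulKg ginvK.
Qed.

Lemma thick_chain (ks : seq T) (F : T -> T) : exists c : nat -> T, forall n,
  (forall k, k \in ks -> S (c n * k)) /\
  (forall i, (i < n)%N -> S (c n * F (c i))).
Proof.
pose next l := projT1 (cid (thick_seq_left (ks ++ map F l))).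
have nextP l : forall k, k \in ks ++ map F l -> S (next l * k).
  exact: projT2 (cid (thick_seq_left (ks ++ map F l))).
pose fix prefix n := if n is m.+1 then next (prefix m) :: prefix m else [::].
have prefixP i n : (i < n)%N -> next (prefix i) \in prefix n.
  elim: n => [//|n IHn]; rewrite ltnS leq_eqVlt => /orP [/eqP ->|/IHn in_n].
    by rewrite inE eqxx.
  by rewrite inE in_n orbT.
exists (fun n => next (prefix n)) => n; split=> [k kks|i lt_in].
  by apply: nextP; rewrite mem_cat kks.
by apply: nextP; rewrite mem_cat map_f ?orbT // prefixP.
Qed.

End Thickness.

Section OrbitClosure.
Variables (T : topologicalType) (G : topGroup T) (X : uniformType)
  (act : T -> X -> X) (S : set T) (x : X).
Hypotheses (flow : is_flow G act) (semS : subsemigroup G S)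
  (thickS : thick G S) (normS : normal_sub G S)
  (compactC : compact (closure [set act s x | s in inv_set G S]))
  (stable : unif_lyapunov_stable act S x).
Local Notation "a * b" := (gmul G a b).
Local Notation "a ^-1" := (ginv G a).
Local Notation e := (gone G).
Local Notation C := (closure [set act s x | s in inv_set G S]).
Local Notation Y := (closure (torbit act x)).

(* Take the chain of [thick_chain] for [ks = [e; t]] and
   [F c = c^-1 t^-1]; the points [c_n^-1 x] lie in the compact set [C], so
   two of them, [b = c_i] and [a = c_j] with [i < j], are [delta]-close. *)
Lemma close_pair t {delta} : entourage delta -> exists a b,
  [/\ S a, S (b * t), S (a * (b^-1 * t^-1)) & delta (act a^-1 x, act b^-1 x)].
Proof.
move=> entd.
have [c cS] := thick_chain thickS normS [:: e; t] (fun c => c^-1 * t^-1).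
have Sc n : S (c n) by rewrite -[c n](gmul1r G); apply: (cS n).1; rewrite inE eqxx.
have cC n : C (act (c n)^-1 x).
  by apply: subset_closure; exists (c n)^-1 => //; exists (c n).
have [i [j [ij dji]]] := compact_seq_close compactC cC (entourage_inv entd).
exists (c j), (c i); split => //; last exact: (cS j).2.
by apply: (cS i).1; rewrite !inE eqxx orbT.
Qed.

(* The orbit lies in [C]: [t x] is the limit of points [t b a^-1 x], and
   [t b a^-1 = (a b^-1 t^-1)^-1] lies in [S^-1]. *)
Lemma orbit_sub_C : torbit act x `<=` C.
Proof.
move=> _ [t _ <-]; apply/closure_ent => eps entEps.
have [delta entd stab_d] := stable _ (entourage_inv entEps).
have [a [b [Sa Sbt Sabt dab]]] := close_pair t entd.
have Stb : S (t * b) by have := normal_conj normS t Sbt; rewrite gmulA mulgK.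
have := stab_d _ _ _ Stb (ex_intro2 _ _ a^-1 I erefl) (ex_intro2 _ _ b^-1 I erefl) dab.
rewrite /= -!(actM flow) mulgK => epsclose.
exists (act ((t * b) * a^-1) x); split => //.
exists (a * (b^-1 * t^-1))^-1; first by exists (a * (b^-1 * t^-1)).
by rewrite !ginvM !ginvK.
Qed.

Lemma compactY : compact Y.
Proof.
apply: (subclosed_compact _ compactC); first exact: closed_closure.
move=> z /(closureS orbit_sub_C).
by rewrite -(closure_id _).1 //; exact: closed_closure.
Qed.

Lemma orbit_recurrent t {eps} : entourage eps ->
  exists2 s, S s & eps (x, act s (act t x)).
Proof.
move=> entEps; have [delta entd stab_d] := stable _ entEps.
have [a [b [Sa _ Sabt dab]]] := close_pair t entd.
exists (a * (b^-1 * t^-1)) => //.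
have := stab_d _ _ _ Sa (ex_intro2 _ _ a^-1 I erefl) (ex_intro2 _ _ b^-1 I erefl) dab.
by rewrite -!(actM flow) gmulVr (act1 flow) -gmulA mulgKV.
Qed.

Lemma invariantY : Defs.invariant act Y.
Proof. exact: orbit_closure_invariant flow x. Qed.

Lemma equicontY : unif_equicont S act Y.
Proof. exact: unif_equicont_closure (act_cont flow) stable. Qed.

(* [Y] is minimal: a nonempty closed invariant [A] in [Y] contains [x], as
   [x] is a limit of points [s y] with [y] in [A], by recurrence and
   equicontinuity; hence [A] contains the whole orbit closure. *)
Lemma minimalY : minimal_flow act Y.
Proof.
split=> [|A AY [y Ay] clA invA]; first by exists x; rewrite -{2}(act1 flow x);
  exact: orbit_closure_orbit.
have closedA : A = closure A by exact/closure_id.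
have Ax : A x.
  rewrite closedA; apply/closure_ent => eps entEps.
  have [E entE [symE trE]] := entourage_sym_split entEps.
  have [d entd dE] := equicontY _ entE.
  have [_ [[t _ <-] dyt]] := (closure_ent _ _).1 (AY y Ay) d entd.
  have [s Ss xst] := orbit_recurrent t entE.
  exists (act s y); split; first exact: invA.
  apply: (trE _ (act s (act t x))) => //.
  exact/symE/(dE s _ _ Ss (AY y Ay) (orbit_closure_orbit x t) dyt).
apply/seteqP; split=> // z; rewrite closedA; apply: closureS => _ [t _ <-].
exact: invA Ax.
Qed.

(* On [Y], the inverse of any [g] in [S] is uniformly approximated by a
   power of [g]: among finitely many approximants of the [g^n], two powers
   [g^(n1+1)], [g^(n2+1)] share one, so [g^(n2-n1-1)] is close to [g^-1]. *)
Lemma inverse_power_approx {eps g} : entourage eps -> S g ->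
  exists k, forall v, Y v -> eps (act g^-1 v, act (gpow G g k) v).
Proof.
move=> entEps Sg; have [E entE [symE trE]] := entourage_sym_split entEps.
have [J [f approx]] := unif_equicont_finite_approx e compactY
  (fun s z _ => invariantY s z) equicontY entE.
pose cell n := projT1 (cid (approx _ (gpow_subsemigroup n semS Sg))).
have cellP n : forall z, Y z -> E (act (gpow G g n.+1) z, act (f (cell n)) z).
  exact: projT2 (cid (approx _ (gpow_subsemigroup n semS Sg))).
have [n1 [n2 [lt12 same]]] := finite_repeat cell.
exists (n2 - n1.+1)%N => v Yv.
pose z := act (gpow G g n1.+1)^-1 (act g^-1 v).
have Yz : Y z by apply: invariantY; exact: invariantY.
have := cellP n2 z Yz; rewrite -same => /symE /(trE _ _ _ (cellP n1 z Yz)).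
have -> : n2.+1 = ((n2 - n1.+1).+1 + n1.+1)%N by rewrite addSn subnK.
by rewrite /z gpowD -!(actM flow) gmulVr gmul1l !mulgK gpowSr mulgK.
Qed.

(* [Y] is an a.p. flow: for [t], pick [v] with [v] and [t^-1 v] in [S];
   approximate [t^-1 v] by some [f i] and [v^-1] by a power of [v], itself
   approximated by some [f o] (or the identity). Then [f i * f o] lies in a
   fixed finite set [K] and [(f i * f o) t] moves points of [Y] little. *)
Lemma apY : ap_flow G act Y.
Proof.
move=> alpha entA.
have [E entE [_ trE]] := entourage_sym_split entA.
have [d entd dE] := equicontY _ entE.
have [E3 entE3 [_ trE3]] := entourage_sym_split entd.
have [J [f approx]] := unif_equicont_finite_approx e compactY
  (fun s z _ => invariantY s z) equicontY (filterI entE entE3).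
pose f' (o : option J) := if o is Some j then f j else e.
exists [set a | forall z, Y z -> alpha (z, act a z)]; last by move=> a z Aa; exact: Aa.
exists [set f' p.1 * f' p.2 | p in [set: option J * option J]].
split=> [|t]; first exact/finite_compact/finite_image/finite_finset.
have [v vS] := thick_seq thickS [:: e; t^-1].
have Sv : S v by rewrite -[v](gmul1l G); apply: vS; rewrite inE eqxx.
have Stv : S (t^-1 * v) by apply: vS; rewrite !inE eqxx orbT.
have [i fi] := approx _ Stv.
have [k vk] := inverse_power_approx entE3 Sv.
have [o fo] : exists o, forall w, Y w -> E3 (act (gpow G v k) w, act (f' o) w).
  case: k {vk} => [|k].
    by exists None => w _; rewrite /= (act1 flow); exact: entourage_refl.
  have [j fj] := approx _ (gpow_subsemigroup k semS Sv).
  by exists (Some j) => w Yw; exact: (fj w Yw).2.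
exists (f' (Some i) * f' o); first by exists (Some i, o).
move=> z Yz; rewrite (actM flow); set w := act t z.
have Yw : Y w by exact: invariantY.
have -> : z = act (t^-1 * v) (act v^-1 w).
  by rewrite /w -!(actM flow) mulgK gmulVl (act1 flow).
rewrite [act (f' _ * _) w](actM flow); apply: (trE _ (act (t^-1 * v) (act (f' o) w))).
- apply: dE => //; [exact: invariantY|exact: invariantY|].
  exact: trE3 (vk w Yw) (fo w Yw).
- exact: (fi _ (invariantY _ _ Yw)).1.
Qed.

End OrbitClosure.

Theorem corollary2 (T : topologicalType) (G : topGroup T) (X : uniformType)
  (act : T -> X -> X) (S : set T) (x : X) :
  hausdorff_space T -> hausdorff_space X -> is_flow G act ->
  subsemigroup G S -> thick G S -> normal_sub G S ->
  compact (closure [set act s x | s in inv_set G S]) ->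
  unif_lyapunov_stable act S x ->
  [/\ compact (closure (torbit act x)),
      minimal_flow act (closure (torbit act x))
    & ap_flow G act (closure (torbit act x))].
Proof.
move=> _ _ flow semS thickS normS compactC stable; split.
- exact: compactY flow thickS normS compactC stable.
- exact: minimalY flow thickS normS compactC stable.
- exact: apY flow semS thickS normS compactC stable.
Qed.
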